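(* Let $\mathcal{T}$ be the set of 9-tuples $(G_1,G_2,G_3,V_{1,2},V_{1,3},V_{2,1},V_{2,3},V_{3,1},V_{3,2})$ of monic polynomials satisfying $(V_{i,j},V_{k,l})=1$ whenever both $i\ne k$ and $j\ne l$. Then the map sending such a tuple to $$A_1=G_1V_{1,2}V_{1,3},\ A_2=G_2V_{2,1}V_{2,3},\ A_3=G_3V_{3,1}V_{3,2},\quad B_1=G_1V_{2,1}V_{3,1},\ B_2=G_2V_{1,2}V_{3,2},\ B_3=G_3V_{1,3}V_{2,3}$$ is a bijection from $\mathcal{T}$ onto the set of 6-tuples $(A_1,A_2,A_3,B_1,B_2,B_3)$ of monic polynomials satisfying $A_1A_2A_3=B_1B_2B_3$. (In particular every such 6-tuple arises this way, with $G_i=(A_i,B_i)$.)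
   Context: Polynomials are in $\mathbb{F}_q[T]$ with $q$ a prime power; $(A,B)$ denotes the monic greatest common divisor. *)

From HB Require Import structures.
From mathcomp Require Import all_boot all_order all_algebra all_field.
Set Implicit Arguments. Unset Strict Implicit. Unset Printing Implicit Defensive.
Import GRing.Theory.
Local Open Scope ring_scope.

Record T9 (F : finFieldType) := mkT9 {
  G1 : {poly F}; G2 : {poly F}; G3 : {poly F};
  V12 : {poly F}; V13 : {poly F}; V21 : {poly F};
  V23 : {poly F}; V31 : {poly F}; V32 : {poly F} }.

Record T6 (F : finFieldType) := mkT6 {
  A1 : {poly F}; A2 : {poly F}; A3 : {poly F};
  B1 : {poly F}; B2 : {poly F}; B3 : {poly F} }.

(* V_{i,j} for indices i <> j in {1,2,3}; other values are never used. *)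
Definition Vof (F : finFieldType) (t : T9 F) (i j : nat) : {poly F} :=
  match i, j with
  | 1, 2 => V12 t | 1, 3 => V13 t
  | 2, 1 => V21 t | 2, 3 => V23 t
  | 3, 1 => V31 t | 3, 2 => V32 t
  | _, _ => 0
  end.

Definition idx3 : seq nat := [:: 1%N; 2%N; 3%N].

Definition inT (F : finFieldType) (t : T9 F) : Prop :=
  [/\ G1 t \is monic, G2 t \is monic, G3 t \is monic,
      (V12 t \is monic) && (V13 t \is monic) && (V21 t \is monic) &&
      (V23 t \is monic) && (V31 t \is monic) && (V32 t \is monic)
    & forall i j k l : nat, i \in idx3 -> j \in idx3 -> k \in idx3 -> l \in idx3 ->
        i != j -> k != l -> i != k -> j != l ->
        coprimep (Vof t i j) (Vof t k l)].

Definition inS (F : finFieldType) (s : T6 F) : Prop :=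
  [/\ (A1 s \is monic) && (A2 s \is monic) && (A3 s \is monic),
      (B1 s \is monic) && (B2 s \is monic) && (B3 s \is monic)
    & A1 s * A2 s * A3 s = B1 s * B2 s * B3 s].

Definition phi (F : finFieldType) (t : T9 F) : T6 F :=
  mkT6 (G1 t * V12 t * V13 t) (G2 t * V21 t * V23 t) (G3 t * V31 t * V32 t)
       (G1 t * V21 t * V31 t) (G2 t * V12 t * V32 t) (G3 t * V13 t * V23 t).

(** A factorization A = G a, B = G b with G monic and (a, b) = 1 is unique,
   G being (A, B).  For A_i, B_i in the image of the map, a_i and b_i are the
   products of the V's in row i and in column i, and the coprimality
   conditions on the V's say exactly that (a_i, b_i) = 1; this gives
   injectivity.  Conversely, split off G_i = (A_i, B_i) from A_i and B_i;
   the coprime cofactors satisfy a_1 a_2 a_3 = b_1 b_2 b_3.  Put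
   V_{1,2} = (a_1, b_2): by Gauss's lemma the cofactor of V_{1,2} in a_1
   divides b_3 and that in b_2 divides a_3, and after cancelling, the
   remaining two cofactors are forced as well. *)
From HB Require Import structures.
From mathcomp Require Import all_boot all_order all_algebra all_field.
Import GRing.Theory.
From mathcomp Require Import ring.
Set Implicit Arguments. Unset Strict Implicit. Unset Printing Implicit Defensive.
Local Open Scope ring_scope.

Section MonicFactorizations.

Variable R : fieldType.
Implicit Types a b d e g p q r x y : {poly R}.

Lemma dvdp_monic_cofactor p d : p \is monic -> d \is monic -> d %| p ->
  exists2 q, q \is monic & p = q * d.
Proof.
move=> mp md /dvdpP[q def_p]; exists q => //.
by rewrite def_p monicMr in mp.
Qed.

Lemma gcdp_mul2l_coprime g x y : coprimep x y -> gcdp (g * x) (g * y) %= g.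
Proof.
move=> cxy; rewrite -(eqp_ltrans (mulp_gcdr x y g)) -[X in _ %= X]mulr1.
by apply: eqp_mull; rewrite gcdp_eqp1.
Qed.

Lemma gcd_split p q : p \is monic -> q \is monic ->
  exists g x y, [/\ [&& g \is monic, x \is monic & y \is monic],
    p = g * x, q = g * y, coprimep x y & g %= gcdp p q].
Proof.
move=> mp mq; set c := gcdp p q.
have c_neq0 : c != 0 by rewrite gcdp_eq0 negb_and monic_neq0.
set g := (lead_coef c)^-1 *: c.
have mg : g \is monic by apply/monicP; rewrite lead_coefZ mulVf ?lead_coef_eq0.
have eq_gc : g %= c by rewrite eqp_scale ?invr_eq0 ?lead_coef_eq0.
have [x mx def_p] : exists2 x, x \is monic & p = x * g.
  by apply: dvdp_monic_cofactor; rewrite // (eqp_dvdl _ eq_gc) dvdp_gcdl.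
have [y my def_q] : exists2 y, y \is monic & q = y * g.
  by apply: dvdp_monic_cofactor; rewrite // (eqp_dvdl _ eq_gc) dvdp_gcdr.
exists g, x, y; split; rewrite 1?mulrC //; first by rewrite mg mx my.
rewrite -gcdp_eqp1 -(eqp_mul2l _ _ (monic_neq0 mg)) mulr1.
by rewrite (eqp_ltrans (mulp_gcdr _ _ _)) ![g * _]mulrC -def_p -def_q eqp_sym.
Qed.

Lemma gcd_split_uniq g g' x y x' y' :
  g \is monic -> g' \is monic -> coprimep x y -> coprimep x' y' ->
  g * x = g' * x' -> g * y = g' * y' -> [/\ g = g', x = x' & y = y'].
Proof.
move=> mg mg' cxy cxy' ex ey.
have eq_gg' : g = g'.
  apply/eqP; rewrite -eqp_monic // -(eqp_ltrans (gcdp_mul2l_coprime g cxy)).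
  by rewrite ex ey gcdp_mul2l_coprime.
by subst g'; split=> //; apply: (mulfI (monic_neq0 mg)).
Qed.

Lemma coprimep_dvd a b x y :
  x %| a -> y %| b -> coprimep a b -> coprimep x y.
Proof. by move=> xa yb /(coprimep_dvdr xa); apply: coprimep_dvdl. Qed.

Lemma dvdp_cancel_coprime g x y r :
  g != 0 -> coprimep x y -> g * x %| g * y * r -> x %| r.
Proof. by move=> g_neq0 cxy; rewrite -mulrA dvdp_mul2l // Gauss_dvdpr. Qed.

Lemma coprime_cross_factor a b d e :
  a \is monic -> e \is monic -> coprimep e d -> a * d = b * e ->
  exists2 f, f \is monic & a = f * e /\ b = f * d.
Proof.
move=> ma me ced eq_ad_be.
have e_dvd_a : e %| a by rewrite -(Gauss_dvdpl _ ced) eq_ad_be dvdp_mull.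
have [f mf def_a] := dvdp_monic_cofactor ma me e_dvd_a.
exists f => //; split=> //; apply: (mulIf (monic_neq0 me)).
by rewrite -eq_ad_be def_a; ring.
Qed.

Lemma coprime_triple_factor a1 a2 a3 b1 b2 b3 :
  a1 \is monic -> a2 \is monic -> a3 \is monic ->
  b1 \is monic -> b2 \is monic -> b3 \is monic ->
  coprimep a1 b1 -> coprimep a2 b2 -> coprimep a3 b3 ->
  a1 * a2 * a3 = b1 * b2 * b3 ->
  exists v12 v13 v21 v23 v31 v32,
    [/\ [&& v12 \is monic, v13 \is monic, v21 \is monic,
            v23 \is monic, v31 \is monic & v32 \is monic],
        [/\ a1 = v12 * v13, a2 = v21 * v23 & a3 = v31 * v32]
      & [/\ b1 = v21 * v31, b2 = v12 * v32 & b3 = v13 * v23]].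
Proof.
move=> ma1 ma2 ma3 mb1 mb2 mb3 c1 c2 c3 eq_ab.
have [v12 [x [y [/and3P[m12 mx my] def_a1 def_b2 cxy _]]]] := gcd_split ma1 mb2.
have v12_neq0 := monic_neq0 m12.
have x_dvd_b3 : x %| b3.
  apply: (dvdp_cancel_coprime v12_neq0 cxy); rewrite -def_a1 -def_b2.
  by rewrite -(Gauss_dvdpr _ c1) mulrA -eq_ab -mulrA dvdp_mulIl.
have y_dvd_a3 : y %| a3.
  have cyx : coprimep y x by rewrite coprimep_sym.
  have c2' : coprimep b2 a2 by rewrite coprimep_sym.
  apply: (dvdp_cancel_coprime v12_neq0 cyx).
  rewrite -def_a1 -def_b2 -(Gauss_dvdpr _ c2').
  by rewrite mulrCA mulrA eq_ab dvdp_mulr ?dvdp_mulIr.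
have [v23 m23 def_b3] := dvdp_monic_cofactor mb3 mx x_dvd_b3.
have [v31 m31 def_a3] := dvdp_monic_cofactor ma3 my y_dvd_a3.
have c23_31 : coprimep v23 v31.
  by rewrite coprimep_sym; apply: coprimep_dvd c3; rewrite ?def_a3 ?def_b3 dvdp_mulIl.
have eq_a2_b1 : a2 * v31 = b1 * v23.
  apply: (mulIf (mulf_neq0 (mulf_neq0 v12_neq0 (monic_neq0 mx)) (monic_neq0 my))).
  transitivity (a1 * a2 * a3); first by rewrite def_a1 def_a3; ring.
  by rewrite eq_ab def_b2 def_b3; ring.
have [v21 m21 [def_a2 def_b1]] := coprime_cross_factor ma2 m23 c23_31 eq_a2_b1.
exists v12, x, v21, v23, v31, y; split.
- by rewrite m12 mx m21 m23 m31 my.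
- by split.
- by split; rewrite // def_b3 mulrC.
Qed.

End MonicFactorizations.

Section NineTuples.

Variable F : finFieldType.
Implicit Types (t : T9 F) (s : T6 F).

Lemma inT_coprime_rows_cols t : inT t <->
  [/\ G1 t \is monic, G2 t \is monic, G3 t \is monic,
      (V12 t \is monic) && (V13 t \is monic) && (V21 t \is monic) &&
      (V23 t \is monic) && (V31 t \is monic) && (V32 t \is monic)
    & [&& coprimep (V12 t * V13 t) (V21 t * V31 t),
          coprimep (V21 t * V23 t) (V12 t * V32 t)
        & coprimep (V31 t * V32 t) (V13 t * V23 t)]].
Proof.
rewrite !coprimepMl !coprimepMr; split.
  move=> [mG1 mG2 mG3 mV cop]; split=> //.
  by rewrite !(cop 1 2 2 1, cop 1 2 3 1, cop 1 3 2 1, cop 1 3 3 1,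
               cop 2 1 1 2, cop 2 1 3 2, cop 2 3 1 2, cop 2 3 3 2,
               cop 3 1 1 3, cop 3 1 2 3, cop 3 2 1 3, cop 3 2 2 3)%N.
move=> [mG1 mG2 mG3 mV /and3P[/andP[/andP[? ?] /andP[? ?]]
                             /andP[/andP[? ?] /andP[? ?]]
                             /andP[/andP[? ?] /andP[? ?]]]].
split=> // i j k l; rewrite !inE.
move=> /or3P[]/eqP-> /or3P[]/eqP-> /or3P[]/eqP-> /or3P[]/eqP-> //= _ _ _ _.
all: by rewrite // coprimep_sym.
Qed.

Lemma phi_inS t : inT t -> inS (phi t).
Proof.
move=> [mG1 mG2 mG3 /andP[/andP[/andP[/andP[/andP[? ?] ?] ?] ?] ?] _].
split; last by rewrite /=; ring.
all: by rewrite /= !monicMr ?mG1 ?mG2 ?mG3.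
Qed.

Lemma phi_inj t t' : inT t -> inT t' -> phi t = phi t' -> t = t'.
Proof.
case: t t' => [g1 g2 g3 v12 v13 v21 v23 v31 v32]
              [g1' g2' g3' v12' v13' v21' v23' v31' v32'].
move=> /inT_coprime_rows_cols[/= m1 m2 m3 + /and3P[c1 c2 c3]].
move=> /andP[/andP[/andP[/andP[/andP[m12 m13] _] m23] _] m32].
move=> /inT_coprime_rows_cols[/= m1' m2' m3' + /and3P[c1' c2' c3']].
move=> /andP[/andP[/andP[/andP[/andP[m12' _] _] _] _] _].
case; rewrite -!mulrA => eA1 eA2 eA3 eB1 eB2 eB3.
have [eG1 eR1 eC1] := gcd_split_uniq m1 m1' c1 c1' eA1 eB1.
have [eG2 eR2 eC2] := gcd_split_uniq m2 m2' c2 c2' eA2 eB2.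
have [eG3 eR3 eC3] := gcd_split_uniq m3 m3' c3 c3' eA3 eB3.
have c13_32 : coprimep v13 v32.
  by rewrite coprimep_sym (coprimep_dvd (dvdp_mulIr _ _) (dvdp_mulIl _ _) c3).
have c13_32' : coprimep v13' v32'.
  by rewrite coprimep_sym (coprimep_dvd (dvdp_mulIr _ _) (dvdp_mulIl _ _) c3').
have [e12 e13 e32] := gcd_split_uniq m12 m12' c13_32 c13_32' eR1 eC2.
subst g1' g2' g3' v12' v13' v32'.
have e23 : v23 = v23' by apply: (mulfI (monic_neq0 m13)).
have e31 : v31 = v31' by apply: (mulIf (monic_neq0 m32)).
subst v23' v31'.
by rewrite (mulIf (monic_neq0 m23) eR2).
Qed.

Lemma phi_onto s : inS s ->
  exists t, [/\ inT t, phi t = s, G1 t %= gcdp (A1 s) (B1 s),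
                G2 t %= gcdp (A2 s) (B2 s) & G3 t %= gcdp (A3 s) (B3 s)].
Proof.
case: s => a1 a2 a3 b1 b2 b3.
move=> [/= /andP[/andP[ma1 ma2] ma3] /andP[/andP[mb1 mb2] mb3] eq_ab].
have [g1 [x1 [y1 [/and3P[mg1 mx1 my1] ea1 eb1 c1 eg1]]]] := gcd_split ma1 mb1.
have [g2 [x2 [y2 [/and3P[mg2 mx2 my2] ea2 eb2 c2 eg2]]]] := gcd_split ma2 mb2.
have [g3 [x3 [y3 [/and3P[mg3 mx3 my3] ea3 eb3 c3 eg3]]]] := gcd_split ma3 mb3.
have eq_xy : x1 * x2 * x3 = y1 * y2 * y3.
  apply: (@mulfI _ (g1 * g2 * g3)); first by rewrite !mulf_neq0 ?monic_neq0.
  transitivity (a1 * a2 * a3); first by rewrite ea1 ea2 ea3; ring.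
  by rewrite eq_ab eb1 eb2 eb3; ring.
have [v12 [v13 [v21 [v23 [v31 [v32 [mV [ex1 ex2 ex3] [ey1 ey2 ey3]]]]]]]] :=
  coprime_triple_factor mx1 mx2 mx3 my1 my2 my3 c1 c2 c3 eq_xy.
exists (mkT9 g1 g2 g3 v12 v13 v21 v23 v31 v32); split=> //.
  apply/inT_coprime_rows_cols; split; rewrite //= -?andbA //.
  by rewrite -ex1 -ex2 -ex3 -ey1 -ey2 -ey3 c1 c2 c3.
by rewrite ea1 ea2 ea3 eb1 eb2 eb3 ex1 ex2 ex3 ey1 ey2 ey3 /phi /= !mulrA.
Qed.

End NineTuples.

Theorem lemma7p3 (F : finFieldType) :
  [/\ (forall t : T9 F, inT t -> inS (phi t)),
      (forall t t' : T9 F, inT t -> inT t' -> phi t = phi t' -> t = t')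
    & (forall s : T6 F, inS s ->
         exists t : T9 F, [/\ inT t, phi t = s,
           G1 t %= gcdp (A1 s) (B1 s), G2 t %= gcdp (A2 s) (B2 s)
           & G3 t %= gcdp (A3 s) (B3 s)])].
Proof. by split; [exact: phi_inS | exact: phi_inj | exact: phi_onto]. Qed.
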